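(* For every $T\ge1$ and every deterministic online algorithm that posts in each round a two-price mechanism $(p_t,q_t)$ with $p_t\le q_t$, there exists an instance with three sellers and three buyers (costs and values in $[0,1]$) on which the algorithm's cumulative gains-from-trade regret over $T$ rounds is at least $T/4$; in particular it is $\Omega(T)$.
   Context: Two-sided market model: sellers have fixed unknown costs $c_i\in[0,1]$, buyers fixed unknown values $v_j\in[0,1]$. In each round the learner posts prices and observes every trader's accept/reject decision; a seller accepts a price $p$ iff $p\ge c_i$, a buyer accepts a price $q$ iff $q\le v_j$ (ties in favour of accepting). A maximum-cardinality matching between accepting sellers and accepting buyers is formed; the GFT of a matching $M$ is $\sum_{(i,j)\in M}(v_j-c_i)$. Benchmark: $\mathrm{GFT}^\star$, the maximum GFT over all matchings. Round-$t$ regret is $\mathrm{GFT}^\star$ minus the minimum GFT over all maximum-cardinality matchings of the traders accepting in round $t$; cumulative regret is the sum over rounds. A two-price mechanism posts a price $p$ to all sellers and a price $q$ to all buyers, with weak budget balance $p\le q$. *)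

From HB Require Import structures.
From mathcomp Require Import all_boot all_order all_algebra.
From mathcomp Require Import reals.
Set Implicit Arguments. Unset Strict Implicit. Unset Printing Implicit Defensive.
Import Order.TTheory GRing.Theory Num.Theory.
Local Open Scope ring_scope.

Section Market.
Variables (R : realType) (n m : nat).
Variables (c : 'I_n -> R) (v : 'I_m -> R).

Definition is_matching (M : {set 'I_n * 'I_m}) : bool :=
  [forall e1 in M, forall e2 in M,
     ((e1.1 == e2.1) || (e1.2 == e2.2)) ==> (e1 == e2)].

Definition gft (M : {set 'I_n * 'I_m}) : R :=
  \sum_(e in M) (v e.2 - c e.1).

(* benchmark: maximum GFT over all matchings (the empty matching, of GFT 0,
   is always a matching, so 0 is a harmless neutral element) *)
Definition gft_opt : R :=
  \big[Num.max/0]_(M : {set 'I_n * 'I_m} | is_matching M) gft M.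

Definition sellers_acc (p : R) : {set 'I_n} := [set i | c i <= p].
Definition buyers_acc (q : R) : {set 'I_m} := [set j | q <= v j].

Definition feasible (p q : R) (M : {set 'I_n * 'I_m}) : bool :=
  is_matching M && (M \subset setX (sellers_acc p) (buyers_acc q)).

Definition max_card (p q : R) : nat :=
  \max_(M : {set 'I_n * 'I_m} | feasible p q M) #|M|.

Definition max_card_matching (p q : R) (M : {set 'I_n * 'I_m}) : bool :=
  feasible p q M && (#|M| == max_card p q).

(* minimum GFT over all maximum-cardinality matchings of accepting traders
   (this set is nonempty, so the [pick] always succeeds) *)
Definition min_gft_round (p q : R) : R :=
  match [pick M | max_card_matching p q M] with
  | Some M0 => \big[Num.min/gft M0]_(M | max_card_matching p q M) gft M
  | None => 0
  end.

Definition round_regret (p q : R) : R := gft_opt - min_gft_round p q.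

Definition obs := ({ffun 'I_n -> bool} * {ffun 'I_m -> bool})%type.

Definition observe (pq : R * R) : obs :=
  ([ffun i => c i <= pq.1], [ffun j => pq.2 <= v j]).

Definition algorithm := seq obs -> R * R.

Definition budget_balanced (A : algorithm) : Prop :=
  forall h, (A h).1 <= (A h).2.

Fixpoint history (A : algorithm) (t : nat) : seq obs :=
  match t with
  | 0 => [::]
  | t'.+1 => rcons (history A t') (observe (A (history A t')))
  end.

Definition cum_regret (A : algorithm) (T : nat) : R :=
  \sum_(t < T) round_regret (A (history A t)).1 (A (history A t)).2.

End Market.

From mathcomp Require Import all_boot all_order all_algebra.
From mathcomp Require Import reals.
From mathcomp Require Import lra.
Set Implicit Arguments.
Unset Strict Implicit.
Unset Printing Implicit Defensive.
Import Order.TTheory GRing.Theory Num.Theory.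
Local Open Scope ring_scope.

(* Take seller costs (0, 0, 1) and buyer values (1, x, x) with x in [1/4, 3/4];
   the optimum trades sellers 0, 1 with buyers 0, 1 for GFT 1 + x.  A buyer
   price q > x only reaches buyer 0 (GFT <= 1), a seller price p < 0 reaches no
   seller, and 0 <= p <= q < x admits sellers 0, 1 and every buyer, so some
   maximum matching pairs them with the two buyers of value x (GFT 2x).  Hence
   every round costs at least 1/4 unless q = x exactly.  The feedback only
   reveals whether q <= x, so bisection keeps an open interval of values x that
   are indistinguishable so far and that no posted q has hit. *)

Section Matchings.
Variables (R : realType) (n m : nat) (c : 'I_n -> R) (v : 'I_m -> R).
Implicit Types (M : {set 'I_n * 'I_m}) (p q : R).

Lemma gft_le_opt M : is_matching M -> gft c v M <= gft_opt c v.
Proof. by move=> hM; apply: le_bigmax_cond. Qed.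

Lemma min_gft_round_le p q M :
  max_card_matching c v p q M -> min_gft_round c v p q <= gft c v M.
Proof.
move=> hM; rewrite /min_gft_round.
by case: pickP => [M0 _|/(_ M)]; [exact: bigmin_le_cond | rewrite hM].
Qed.

Lemma matching_set0 : is_matching (set0 : {set 'I_n * 'I_m}).
Proof. by apply/forallP => e; rewrite inE. Qed.

Lemma exists_feasible_min_gft_round p q :
  exists2 M, feasible c v p q M & min_gft_round c v p q <= gft c v M.
Proof.
rewrite /min_gft_round; case: pickP => [M0 /andP[hf _]|_].
  by exists M0 => //; apply: bigmin_le_id.
exists set0; last by rewrite /gft big_set0.
by rewrite /feasible sub0set matching_set0.
Qed.

Lemma is_matching_set2 (a b : 'I_n * 'I_m) :
  a.1 != b.1 -> a.2 != b.2 -> is_matching [set a; b].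
Proof.
move=> h1 h2; apply/forallP => e1; apply/implyP => /set2P[]->;
  apply/forallP => e2; apply/implyP => /set2P[]->; rewrite ?eqxx ?implybT //.
  by rewrite (negbTE h1) (negbTE h2).
by rewrite eq_sym (negbTE h1) eq_sym (negbTE h2).
Qed.

Lemma gft_set2 (a b : 'I_n * 'I_m) :
  a != b -> gft c v [set a; b] = (v a.2 - c a.1) + (v b.2 - c b.1).
Proof. by move=> hab; rewrite /gft big_setU1 ?big_set1 // inE. Qed.

Lemma matching_inj_seller {M} :
  is_matching M -> {in M &, injective (fun e : 'I_n * 'I_m => e.1)}.
Proof.
move=> /forallP hM e1 e2 h1 h2 /= he.
by move: (hM e1); rewrite h1 => /forallP /(_ e2); rewrite h2 he eqxx => /eqP.
Qed.

Lemma matching_inj_buyer {M} :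
  is_matching M -> {in M &, injective (fun e : 'I_n * 'I_m => e.2)}.
Proof.
move=> /forallP hM e1 e2 h1 h2 /= he.
by move: (hM e1); rewrite h1 => /forallP /(_ e2); rewrite h2 he eqxx orbT => /eqP.
Qed.

Lemma card_feasible_le_sellers p q M :
  feasible c v p q M -> (#|M| <= #|sellers_acc c p|)%N.
Proof.
move=> /andP[hM /subsetP hs].
rewrite -(card_in_imset (matching_inj_seller hM)); apply: subset_leq_card.
by apply/subsetP => _ /imsetP[[a b] /hs + ->]; rewrite in_setX => /andP[].
Qed.

Lemma gft_feasible_le_buyers p q M (B : {set 'I_m}) :
  (forall i, 0 <= c i) -> (forall j, 0 <= v j) ->
  buyers_acc v q \subset B -> feasible c v p q M ->
  gft c v M <= \sum_(j in B) v j.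
Proof.
move=> c_ge0 v_ge0 /subsetP accB /andP[hM /subsetP hs].
apply: (@le_trans _ _ (\sum_(e in M) v e.2)).
  by apply: ler_sum => e _; rewrite lerBlDr lerDl.
rewrite -(big_imset _ (matching_inj_buyer hM)) /=.
set S := _ @: M; have sSB : S \subset B.
  by apply/subsetP => _ /imsetP[[a b] /hs + ->]; rewrite in_setX => /andP[_ /accB].
rewrite [X in _ <= X](big_setID S) /= (setIidPr sSB) lerDl.
exact: sumr_ge0.
Qed.

End Matchings.
Arguments exists_feasible_min_gft_round {R n m} c v p q.

Section Intervals.
Variable F : realFieldType.

Lemma midpoint_in_itv (lo hi : F) : lo < hi -> lo < (lo + hi) / 2 < hi.
Proof. by move=> lt_lohi; apply/andP; split; lra. Qed.

Lemma le_notin_itv (lo hi q x y : F) : lo < x < hi -> lo < y < hi ->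
  ~~ (lo < q < hi) -> (q <= x) = (q <= y).
Proof.
move=> /andP[hx1 hx2] /andP[hy1 hy2]; rewrite negb_and -!leNgt.
by case/orP => hq; apply/idP/idP; lra.
Qed.

End Intervals.

Section HardInstance.
Variable R : realType.
Implicit Types (x p q : R).

Definition hard_cost (i : 'I_3) : R := if i == 2 :> nat then 1 else 0.
Definition hard_value x (j : 'I_3) : R := if j == 0 :> nat then 1 else x.

Lemma hard_cost_ge0 i : 0 <= hard_cost i.
Proof. by rewrite /hard_cost; case: ifP. Qed.

Lemma hard_value_ge0 x : 0 <= x -> forall j, 0 <= hard_value x j.
Proof. by move=> x_ge0 j; rewrite /hard_value; case: ifP. Qed.

Lemma hard_gft_opt_ge x : 1 + x <= gft_opt hard_cost (hard_value x).
Proof.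
have -> : 1 + x = gft hard_cost (hard_value x) [set (0, 0); (1, 1)].
  by rewrite gft_set2 // /hard_cost /hard_value /= !subr0.
exact/gft_le_opt/is_matching_set2.
Qed.

Lemma hard_min_gft_high x p q : 0 <= x -> x < q ->
  min_gft_round hard_cost (hard_value x) p q <= 1.
Proof.
move=> x_ge0 hxq.
have [M hf hM] := exists_feasible_min_gft_round hard_cost (hard_value x) p q.
have acc0 : buyers_acc (hard_value x) q \subset [set 0].
  apply/subsetP => j; rewrite !inE /hard_value -(inj_eq val_inj) /=.
  by case: ifP => // _; rewrite leNgt hxq.
apply: le_trans hM _.
apply: le_trans (gft_feasible_le_buyers hard_cost_ge0 (hard_value_ge0 x_ge0) acc0 hf) _.
by rewrite big_set1.
Qed.

Lemma hard_min_gft_no_seller x p q : p < 0 ->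
  min_gft_round hard_cost (hard_value x) p q <= 0.
Proof.
move=> p_lt0.
have [M hf hM] := exists_feasible_min_gft_round hard_cost (hard_value x) p q.
have noS : sellers_acc hard_cost p = set0.
  by apply/setP => i; rewrite !inE leNgt (lt_le_trans p_lt0 (hard_cost_ge0 i)).
move: (card_feasible_le_sellers hf); rewrite noS cards0 leqn0 cards_eq0 => /eqP M0.
by move: hM; rewrite M0 /gft big_set0.
Qed.

Lemma hard_min_gft_low x p q : 0 <= p -> p <= q -> q < x -> x < 1 ->
  min_gft_round hard_cost (hard_value x) p q <= x + x.
Proof.
move=> p_ge0 hpq hqx x_lt1.
set M := [set ((0 : 'I_3), (1 : 'I_3)); (1, 2)].
have accS : sellers_acc hard_cost p = [set 0; 1].
  apply/setP => i; rewrite !inE /hard_cost -!(inj_eq val_inj) /=.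
  case: i => [[|[|[|k]]] hk] //=; rewrite ?p_ge0 //.
  by apply/negbTE; rewrite -ltNge; lra.
have hf : feasible hard_cost (hard_value x) p q M.
  rewrite /feasible is_matching_set2 //= accS.
  apply/subsetP => e /set2P[]->; rewrite in_setX !inE /hard_value /=; exact: ltW.
have hmax : max_card_matching hard_cost (hard_value x) p q M.
  rewrite /max_card_matching hf /max_card; apply/eqP/anti_leq/andP; split.
    exact: leq_bigmax_cond hf.
  apply/bigmax_leqP => M' /card_feasible_le_sellers.
  by rewrite accS !cards2.
have := min_gft_round_le hmax.
by rewrite gft_set2 // /hard_cost /hard_value /= !subr0.
Qed.

Lemma hard_round_regret x p q : 4^-1 <= x <= 3/4 -> p <= q -> q != x ->
  4^-1 <= round_regret hard_cost (hard_value x) p q.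
Proof.
move=> /andP[hx1 hx2] hpq hqx; rewrite /round_regret.
have hopt := hard_gft_opt_ge x.
have x_ge0 : 0 <= x by lra.
have [hxq|hqx'] := ltP x q.
  by have := hard_min_gft_high p x_ge0 hxq; lra.
have {hqx'} q_lt_x : q < x by rewrite lt_neqAle hqx hqx'.
have [p_lt0|p_ge0] := ltP p 0.
  by have := hard_min_gft_no_seller x q p_lt0; lra.
have x_lt1 : x < 1 by lra.
by have := hard_min_gft_low p_ge0 hpq q_lt_x x_lt1; lra.
Qed.

Lemma observe_hard_value x y (pq : R * R) : (pq.2 <= x) = (pq.2 <= y) ->
  observe hard_cost (hard_value x) pq = observe hard_cost (hard_value y) pq.
Proof.
move=> hxy; congr pair; apply/ffunP => j; rewrite !ffunE /hard_value.
by case: ifP.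
Qed.

Definition blind_itv (A : algorithm R 3 3) (t : nat) (lo hi : R) : Prop :=
  forall x y, lo < x < hi -> lo < y < hi ->
    history hard_cost (hard_value x) A t = history hard_cost (hard_value y) A t
    /\ forall s, (s < t)%N -> ~~ (lo < (A (history hard_cost (hard_value x) A s)).2 < hi).

Lemma blind_itv_step A t lo hi : lo < hi -> blind_itv A t lo hi ->
  exists lo' hi', [/\ lo <= lo', lo' < hi', hi' <= hi & blind_itv A t.+1 lo' hi'].
Proof.
move=> lt_lohi blind.
have hz := midpoint_in_itv lt_lohi; set z := (lo + hi) / 2 in hz.
set q := (A (history hard_cost (hard_value z) A t)).2.
suff shrink : forall lo' hi', lo <= lo' -> lo' < hi' -> hi' <= hi ->
    ~~ (lo' < q < hi') -> blind_itv A t.+1 lo' hi'.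
  have [/andP[hq1 hq2]|hq] := boolP (lo < q < hi).
    exists lo, q; split; rewrite ?lexx ?ltW //.
    by apply: shrink; rewrite ?lexx ?ltxx ?andbF ?ltW.
  by exists lo, hi; split; rewrite ?lexx //; apply: shrink; rewrite ?lexx.
move=> lo' hi' hlo lt' hhi hq x y hx hy.
have widen w : lo' < w < hi' -> lo < w < hi by case/andP => ? ?; apply/andP; lra.
have [hHx hQx] := blind x z (widen x hx) hz.
have [hHy _] := blind y z (widen y hy) hz.
have qx : (A (history hard_cost (hard_value x) A t)).2 = q by rewrite hHx.
split.
  rewrite /= hHx hHy; congr rcons; apply: observe_hard_value.
  exact: le_notin_itv hx hy hq.
move=> s; rewrite ltnS leq_eqVlt => /orP[/eqP -> | hs]; first by rewrite qx.
apply: contra (hQx s hs) => /andP[hq1 hq2]; apply/andP; lra.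
Qed.

Lemma exists_blind_itv A t : exists lo hi,
  [/\ 4^-1 <= lo, lo < hi, hi <= 3/4 & blind_itv A t lo hi].
Proof.
elim: t => [|t [lo [hi [hlo lt_lohi hhi blind]]]].
  by exists 4^-1, (3/4); split; [|lra| |move=> x y _ _; split].
have [lo' [hi' [hlo' lt' hhi' blind']]] := blind_itv_step lt_lohi blind.
by exists lo', hi'; split => //; lra.
Qed.

End HardInstance.
Arguments hard_cost {R}.

Theorem theorem4p4 (R : realType) (T : nat) (hT : (1 <= T)%N)
  (A : algorithm R 3 3) (hA : budget_balanced A) :
  exists (c : 'I_3 -> R) (v : 'I_3 -> R),
    (forall i, 0 <= c i <= 1) /\ (forall j, 0 <= v j <= 1) /\
    T%:R / 4 <= cum_regret c v A T.
Proof.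
have [lo [hi [hlo lt_lohi hhi blind]]] := exists_blind_itv A T.
have hx := midpoint_in_itv lt_lohi; set x := (lo + hi) / 2 in hx; clearbody x.
have [_ missed] := blind x x hx hx.
exists hard_cost, (hard_value x); split; [|split].
- by move=> i; rewrite /hard_cost; case: ifP; rewrite ?lexx ?ler01.
- by move=> j; rewrite /hard_value; case: ifP; rewrite ?lexx ?ler01 //; lra.
apply: (@le_trans _ _ (\sum_(t < T) (4^-1 : R))).
  by rewrite sumr_const card_ord -[4^-1 *+ T]mulr_natl.
apply: ler_sum => t _; apply: hard_round_regret; [lra | exact: hA |].
by apply: contraNneq (missed t (ltn_ord t)) => ->.
Qed.
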